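(* Let $k\ge 1$ and let $m,N$ be integers with $N\ge 3$, $m\ge 1$, $\gcd(m,N)=1$, such that $e^{2\pi i m/N}$ is a root of $Q_{k-1}(q)$. Then $\gcd(N,4k+1)\in\{1,3\}$. In particular, if $k\not\equiv 2\pmod 3$, then $\gcd(N,4k+1)=1$.
   Context: $Q_{k-1}(q)=q^{4k+4}-q^{4k+3}-q^{4k+2}-q^{4k+1}+q^3+q^2+q-1=(q^4-1)P_{k-1}(q)$, where $P_{k-1}(q)=1+\sum_{l=1}^{k} q^{4l-4}(q^4-q^3-q^2-q)$. *)

From HB Require Import structures.
From mathcomp Require Import all_boot all_order all_algebra all_field.
Set Implicit Arguments. Unset Strict Implicit. Unset Printing Implicit Defensive.
Import Order.TTheory GRing.Theory Num.Theory.
Local Open Scope ring_scope.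

Definition Qpoly (j : nat) : {poly algC} :=
  'X^(4 * j + 8) - 'X^(4 * j + 7) - 'X^(4 * j + 6) - 'X^(4 * j + 5)
  + 'X^3 + 'X^2 + 'X - 1.

(* e^{2 pi i m / N} in algC.  N.-root (-1) is the N-th root of -1 of minimal
   nonnegative argument, i.e. e^{i pi / N} (for N > 0); hence its (2m)-th power
   is e^{2 pi i m / N}. *)
Definition expi2pi (m N : nat) : algC := (N.-root (-1)) ^+ (2 * m).

From HB Require Import structures.
From mathcomp Require Import all_boot all_order all_algebra all_field.
From mathcomp Require Import zify ring.
Set Implicit Arguments. Unset Strict Implicit.
Unset Printing Implicit Defensive.
Import Order.TTheory GRing.Theory Num.Theory.

(* Write n := 4k + 1 and A(x) := x^3 - x^2 - x - 1, B(x) := x^3 + x^2 + x - 1,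
   so that Q_{k-1}(x) = x^n A(x) + B(x).
   1. q := e^{2 pi i m/N} is a primitive N-th root of unity: N.-root (-1) has
      maximal real part among the N-th roots of -1, and a unimodular r <> 1
      always has an h-th root (h > 1) of larger real part, which forces
      N.-root (-1) to be a primitive 2N-th root of unity.
   2. If N = c d with d | n and 1 + c t is coprime to N, a Galois automorphism
      sends q to x := q^(1 + c t), again a root of Q_{k-1}; as x^n = q^n, x is
      a root of the cubic q^n A + B, which is not the zero polynomial.
      Since t |-> q^(1 + c t) is injective on t < d, at most three such t exist.
   3. For d = p >= 5 prime, resp. d = 9, at most one t in {0,..,4}, resp. in
      {0,3,6,1,2}, fails the coprimality, giving four admissible shifts.
   4. So gcd(N, n) is a power of 3 (n is odd) not divisible by 9.
   The file first collects the elementary arithmetic facts used in 3 and 4,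
   then proves 1, 2 and 3 in turn, and derives the theorem from them. *)

(* Among shifts t that are multiples of p or smaller than p, at most one makes
   p divide 1 + c t: two such t would be distinct modulo p. *)
Lemma bad_shifts_unique p c s t : prime p ->
  (p %| s) || (s < p) -> (p %| t) || (t < p) ->
  p %| 1 + c * s -> p %| 1 + c * t -> s = t.
Proof.
move=> p_pr; have p_gt1 := prime_gt1 p_pr.
have p_ndvd1 : ~~ (p %| 1) by rewrite dvdn1 neq_ltn p_gt1 orbT.
have small x : (p %| x) || (x < p) -> p %| 1 + c * x -> x < p.
  case/orP=> [px|//]; rewrite (dvdn_addl _ (dvdn_mull c px)).
  by rewrite (negbTE p_ndvd1).
move=> ps pt ds dt; have sp := small s ps ds; have tp := small t pt dt.
wlog st : s t ps pt ds dt sp tp / s <= t.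
  by move=> IH; case: (leqP s t) => [|/ltnW] le; [|apply/esym]; apply: IH.
have : p %| c * (t - s) by rewrite mulnBr -(subnDl 1) dvdn_sub.
rewrite Euclid_dvdM // => /orP[pc|pts].
  by move: ds; rewrite (dvdn_addl _ (dvdn_mulr s pc)) (negbTE p_ndvd1).
apply/eqP; rewrite eqn_leq st -subn_eq0 -leqn0 leqNgt.
by apply: contraL pts => ts_gt0; rewrite gtnNdvd //; lia.
Qed.

(* 1 + c t is always coprime to c, so coprimality with c p^e is decided by p. *)
Lemma coprime_shift c p e t : prime p -> 0 < e ->
  ~~ (p %| 1 + c * t) -> coprime (1 + c * t) (c * p ^ e).
Proof.
move=> p_pr e_gt0 ndvd; rewrite coprimeMr coprime_pexpr //; apply/andP; split.
  by rewrite /coprime addnC mulnC gcdnC gcdnMDl gcdn1.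
by rewrite coprime_sym prime_coprime.
Qed.

Lemma count_unique_le1 (T : eqType) (a : pred T) (s : seq T) : uniq s ->
  {in s &, forall x y, a x -> a y -> x = y} -> count a s <= 1.
Proof.
move=> s_uniq a_uniq; rewrite -size_filter.
case E: (filter a s) => [|x [|y r]] //; have := filter_uniq a s_uniq.
have /[!mem_filter]/andP[ax xs] : x \in filter a s by rewrite E mem_head.
have /[!mem_filter]/andP[ay ys] : y \in filter a s.
  by rewrite E inE mem_head orbT.
by rewrite E /= inE (a_uniq x y xs ys ax ay) eqxx.
Qed.

Lemma divisor_one_or_three g : 0 < g ->
  (forall p, prime p -> p %| g -> p = 3) -> ~~ (9 %| g) -> g \in [:: 1; 3].
Proof.
move=> g_gt0 g_primes nine_ndvd.
have g_3nat : 3.-nat g.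
  by apply/pnatP => // p p_pr p_g; rewrite inE (g_primes p).
have g_pow : g = 3 ^ logn 3 g by rewrite -p_part part_pnat_id.
have log_lt2 : logn 3 g < 2 by rewrite ltnNge -pfactor_dvdn.
by move: g_pow log_lt2; case: (logn 3 g) => [|[|l]] ->.
Qed.

Local Open Scope ring_scope.

Lemma geom_sum_eq0 (R : idomainType) (x : R) h :
  x ^+ h = 1 -> x != 1 -> \sum_(i < h) x ^+ i = 0.
Proof.
move=> xh x_neq1; apply/eqP; have := subrX1 x h.
by rewrite xh subrr => /esym/eqP; rewrite mulf_eq0 subr_eq0 (negbTE x_neq1).
Qed.

Lemma sum_prim_root_powers (R : idomainType) (z : R) h i :
  h.-primitive_root z ->
  \sum_(j < h) (z ^+ i) ^+ j = if (h %| i)%N then h%:R else 0.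
Proof.
move=> z_prim; rewrite (prim_order_dvd z_prim).
have [zi_eq1 | zi_neq1] := eqVneq.
  rewrite zi_eq1 (eq_bigr (fun _ => 1)) ?sumr_const ?card_ord //.
  by move=> j; rewrite expr1n.
by rewrite geom_sum_eq0 // exprAC (prim_expr_order z_prim) expr1n.
Qed.

Lemma norm_sub1_sqr (z : algC) : `|z| = 1 -> `|z - 1| ^+ 2 = 2 - 2 * 'Re z.
Proof.
move=> z_norm; have z_conj : z * z^* = 1 by rewrite -normCK z_norm expr1n.
rewrite normCK rmorphB rmorph1 ReE [2 * _]mulrC divfK ?pnatr_eq0 //.
by transitivity (z * z^* + 1 - (z + z^*)); [ring | rewrite z_conj; ring].
Qed.

(* With U_j the h-th
   roots of r and P(x) = 1 + x + ... + x^(h-1), we have (U_j - 1) P(U_j) = r - 1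
   and sum_j P(U_j) = h; since the U_j are distinct, some |P(U_j)| > 1, so U_j
   is closer to 1 than r is. *)
Lemma root_with_larger_Re (r : algC) h : (1 < h)%N -> `|r| = 1 -> r != 1 ->
  exists2 u, u ^+ h = r & 'Re r < 'Re u.
Proof.
move=> h_gt1 r_norm r_neq1; have h_gt0 := ltnW h_gt1.
have [z z_prim] := C_prim_root_exists h_gt0.
set u0 := h.-root r; pose U (j : nat) := u0 * z ^+ j.
pose P (x : algC) := \sum_(i < h) x ^+ i.
have U_pow j : U j ^+ h = r.
  by rewrite exprMn rootCK // exprAC (prim_expr_order z_prim) expr1n mulr1.
have U_norm j : `|U j| = 1.
  by apply/eqP; rewrite -(pexpr_eq1 h_gt0) ?normr_ge0 // -normrX U_pow r_norm.
have U_P j : (U j - 1) * P (U j) = r - 1 by rewrite -subrX1 U_pow.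
have sum_P : \sum_(j < h) P (U j) = \sum_(j < h) 1.
  rewrite sumr_const card_ord /P exchange_big /=.
  under eq_bigr do under eq_bigr do rewrite exprMn exprAC.
  under eq_bigr do rewrite -mulr_sumr sum_prim_root_powers //.
  rewrite (bigD1 (Ordinal h_gt0)) //= dvdn0 expr0 mul1r big1 ?addr0 //.
  move=> i i_neq0.
  have i_gt0 : (0 < i)%N.
    by rewrite lt0n; apply: contraNneq i_neq0 => i0; apply/eqP/val_inj.
  by rewrite gtnNdvd // mulr0.
have [j P_big] : exists j : 'I_h, 1 < `|P (U j)|.
  apply/existsP; apply: contraT => /existsPn P_small.
  have P_le1 (j : 'I_h) : true -> `|P (U j)| <= 1.
    by rewrite real_leNgt ?normr_real ?rpred1 ?P_small.
  have U_eq_r (j : 'I_h) : U j = r.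
    have := U_P j; rewrite (normC_sum_upper P_le1 sum_P) // mulr1.
    by move/addIr.
  have u0_neq0 : u0 != 0 by rewrite rootC_eq0 // -normr_eq0 r_norm oner_neq0.
  have := U_eq_r (Ordinal h_gt0); rewrite -(U_eq_r (Ordinal h_gt1)) /U /=.
  move/(mulfI u0_neq0)/eqP; rewrite (eq_prim_root_expr z_prim) !modn_small //.
have norms : `|U j - 1| * `|P (U j)| = `|r - 1| by rewrite -normrM U_P.
have r1_pos : 0 < `|r - 1| by rewrite normr_gt0 subr_eq0.
have U1_pos : 0 < `|U j - 1|.
  by rewrite lt_def normr_ge0 andbT; apply: contraTneq r1_pos => U1_0;
     rewrite -norms U1_0 mul0r ltxx.
have : `|U j - 1| ^+ 2 < `|r - 1| ^+ 2.
  by rewrite ltrXn2r // ?normr_ge0 // -norms ltr_pMr.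
by rewrite !norm_sub1_sqr // ltrD2l ltrN2 ltr_pM2l //; exists (U j).
Qed.

(* N.-root (-1) has maximal real part among all N-th roots of -1 (complex
   conjugation reduces to roots in the upper half-plane). *)
Lemma rootC_opp1_Re_max N (y : algC) : (0 < N)%N -> y ^+ N = -1 ->
  'Re y <= 'Re (N.-root (-1)).
Proof.
move=> N_gt0 yN; have [Im_ge0 | Im_lt0] := boolP (0 <= 'Im y).
  exact: rootC_Re_max.
rewrite -Re_conj; apply: rootC_Re_max => //.
  by rewrite -rmorphXn yN rmorphN1.
by rewrite Im_conj oppr_ge0 ltW // real_ltNge ?Creal_Im.
Qed.

(* Otherwise its
   order is 2N/h with h > 1 odd, and an h-th root of it of larger real part
   would be an N-th root of -1 contradicting the maximality above. *)
Lemma rootC_opp1_prim N :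
  (0 < N)%N -> (2 * N).-primitive_root (N.-root (-1 : algC)).
Proof.
move=> N_gt0; set r := N.-root (-1 : algC).
have rN : r ^+ N = -1 by rewrite rootCK.
have opp1_neq1 : (-1 : algC) != 1.
  by rewrite -subr_eq0 -opprD oppr_eq0 -mulr2n pnatr_eq0.
have r2N : r ^+ (2 * N) = 1 by rewrite mulnC exprM rN sqrrN expr1n.
have N2_gt0 : (0 < 2 * N)%N by rewrite muln_gt0.
have [d r_prim /dvdnP[h Eh]] := prim_order_exists N2_gt0 r2N.
have [h_eq1 | h_neq1] := eqVneq h 1%N; first by rewrite Eh h_eq1 mul1n.
exfalso; have d_ndvd_N : ~~ (d %| N)%N by rewrite (prim_order_dvd r_prim) rN.
have h_odd : odd h.
  apply: contraNT d_ndvd_N; rewrite -dvdn2 => /dvdnP[h' Eh'].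
  by apply/dvdnP; exists h'; move: Eh; rewrite Eh'; lia.
have /dvdnP[M EM] : (2 %| d)%N.
  by have := dvdn_mulr N (dvdnn 2); rewrite Eh Euclid_dvdM // dvdn2 h_odd.
have N_hM : N = (h * M)%N by move: Eh; rewrite EM; lia.
have rM : r ^+ M = -1.
  have : (r ^+ M) ^+ 2 == 1 by rewrite -exprM -EM (prim_expr_order r_prim).
  rewrite sqrf_eq1 => /orP[/eqP rM1 | /eqP //].
  move: rN; rewrite N_hM mulnC exprM rM1 expr1n => /eqP.
  by rewrite eq_sym (negbTE opp1_neq1).
have h_gt1 : (1 < h)%N by move: h_odd h_neq1; case: (h) => [|[|]].
have r_norm : `|r| = 1.
  by apply/eqP; rewrite -(pexpr_eq1 N_gt0) ?normr_ge0 // -normrX rN normrN1.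
have r_neq1 : r != 1 by apply: contra_eq_neq rN => ->; rewrite expr1n eq_sym.
have [u uh Re_lt] := root_with_larger_Re h_gt1 r_norm r_neq1.
have uN : u ^+ N = -1 by rewrite N_hM exprM uh rM.
by have := le_lt_trans (rootC_opp1_Re_max N_gt0 uN) Re_lt; rewrite ltxx.
Qed.

Lemma expi2pi_prim m N :
  (0 < N)%N -> coprime m N -> N.-primitive_root (expi2pi m N).
Proof.
move=> N_gt0 m_N; have := exp_prim_root (rootC_opp1_prim N_gt0) (2 * m)%N.
by rewrite -muln_gcdr (eqP m_N) muln1 mulKn.
Qed.

Definition cubicA {R : nzRingType} (x : R) : R := x ^+ 3 - x ^+ 2 - x - 1.
Definition cubicB {R : nzRingType} (x : R) : R := x ^+ 3 + x ^+ 2 + x - 1.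

Lemma Qpoly_hornerE j x :
  (Qpoly j).[x] = x ^+ (4 * j + 5) * cubicA x + cubicB x.
Proof.
have shift i : x ^+ (4 * j + (5 + i)) = x ^+ (4 * j + 5) * x ^+ i.
  by rewrite addnA exprD.
rewrite /Qpoly !hornerE (shift 3%N) (shift 2%N) (shift 1%N) /cubicA /cubicB /=.
by move: (x ^+ (4 * j + 5)) => y; ring.
Qed.

(* For any y, the polynomial y A + B is nonzero (its X^3 and X^2 coefficients
   y + 1 and 1 - y do not both vanish) of degree at most 3, so it has at most
   three roots. *)
Lemma cubic_pencil_roots (R : numDomainType) (y : R) (xs : seq R) : uniq xs ->
  {in xs, forall x, y * cubicA x + cubicB x = 0} -> (size xs <= 3)%N.
Proof.
move=> xs_uniq xs_roots.
pose p : {poly R} := y *: ('X^3 - 'X^2 - 'X - 1) + ('X^3 + 'X^2 + 'X - 1).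
have p_eval x : p.[x] = y * cubicA x + cubicB x.
  by rewrite /p !hornerE /cubicA /cubicB.
have p3 : p`_3 = y + 1 by rewrite !coefE /= !subr0 mulr1 !addr0.
have p2 : p`_2 = 1 - y.
  by rewrite !coefE /= !subr0 sub0r add0r mulrN1 addr0 addrC.
have p_neq0 : p != 0.
  apply/eqP=> p0; move: p3 p2; rewrite p0 !coef0 => /eqP.
  rewrite eq_sym addr_eq0.
  by move=> /eqP -> /eqP; rewrite opprK eq_sym -(natrD _ 1 1) pnatr_eq0.
have p_size : (size p <= 4)%N.
  apply/leq_sizeP => i i_ge4; rewrite !coefE.
  by case: i i_ge4 => [|[|[|[|i]]]] //= _; rewrite !subr0 !addr0 mulr0.
have xs_root : all (root p) xs.
  by apply/allP => x /xs_roots x_root; rewrite /root p_eval x_root.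
by rewrite -ltnS (leq_trans (max_poly_roots p_neq0 xs_root xs_uniq) p_size).
Qed.

Lemma rmorph_cubicA (R S : nzRingType) (u : {rmorphism R -> S}) (x : R) :
  u (cubicA x) = cubicA (u x).
Proof. by rewrite /cubicA !(rmorphB, rmorphXn, rmorph1). Qed.

Lemma rmorph_cubicB (R S : nzRingType) (u : {rmorphism R -> S}) (x : R) :
  u (cubicB x) = cubicB (u x).
Proof. by rewrite /cubicB !(rmorphB, rmorphD, rmorphXn, rmorph1). Qed.

Section Conjugates.
Variables (N n c d : nat) (q : algC).
Hypotheses (q_prim : N.-primitive_root q) (N_cd : N = (c * d)%N).
Hypothesis d_dvd_n : (d %| n)%N.
Hypothesis q_root : q ^+ n * cubicA q + cubicB q = 0.

(* The Galois conjugate x = q^(1 + c t) is a root of q^n A + B, because it is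
   a root of x^n A + B and x^n = q^n (N divides c t n). *)
Lemma conjugate_root t : coprime (1 + c * t) N ->
  q ^+ n * cubicA (q ^+ (1 + c * t)) + cubicB (q ^+ (1 + c * t)) = 0.
Proof.
move=> t_cop; have [u u_pow] := Qn_aut_exists t_cop.
have u_q : u q = q ^+ (1 + c * t) by rewrite u_pow // (prim_expr_order q_prim).
have same_pow : u q ^+ n = q ^+ n.
  have N_dvd : (N %| c * t * n)%N by rewrite N_cd -mulnA dvdn_mul ?dvdn_mull.
  move: N_dvd; rewrite (prim_order_dvd q_prim) => /eqP q_ctn.
  by rewrite u_q -exprM mulnDl mul1n exprD q_ctn mulr1.
have := congr1 u q_root.
by rewrite rmorph0 rmorphD rmorphM rmorphXn rmorph_cubicA rmorph_cubicB
  same_pow u_q.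
Qed.

(* Distinct t < d give distinct conjugates q^(1 + c t), so at most three shifts
   t < d have 1 + c t coprime to N. *)
Lemma admissible_shifts_le3 (ts : seq nat) : uniq ts ->
  all (fun t => (t < d) && coprime (1 + c * t) N)%N ts -> (size ts <= 3)%N.
Proof.
move=> ts_uniq ts_adm; have c_gt0 : (0 < c)%N.
  by move: (prim_order_gt0 q_prim); rewrite N_cd muln_gt0 => /andP[].
rewrite -(size_map (fun t => q ^+ (1 + c * t))).
apply: (cubic_pencil_roots (y := q ^+ n)).
  rewrite map_inj_in_uniq // => s t s_ts t_ts /eqP.
  move/allP: ts_adm => adm; case/andP: (adm s s_ts) => s_lt _.
  case/andP: (adm t t_ts) => t_lt _.
  rewrite (eq_prim_root_expr q_prim) eqn_modDl N_cd -!muln_modr eqn_pmul2l //.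
  by rewrite !modn_small // => /eqP.
move=> _ /mapP[t t_ts ->]; apply: conjugate_root.
by case/andP: (allP ts_adm t t_ts).
Qed.

End Conjugates.

(* No prime power p^e divides both N and n as soon as five candidate shifts
   t < p^e (multiples of p or smaller than p) are available: at most one of
   them is not admissible, leaving four. *)
Lemma no_common_prime_power N n (q : algC) p e (s : seq nat) :
  N.-primitive_root q -> q ^+ n * cubicA q + cubicB q = 0 ->
  prime p -> (0 < e)%N -> (p ^ e %| N)%N -> (p ^ e %| n)%N ->
  uniq s -> size s = 5%N ->
  all (fun t => (t < p ^ e) && ((p %| t) || (t < p)))%N s -> False.
Proof.
move=> q_prim q_root p_pr e_gt0 pe_N pe_n s_uniq s_size s_cand.
set c := (N %/ p ^ e)%N; have N_cd : N = (c * p ^ e)%N by rewrite divnK.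
pose good t := ~~ (p %| 1 + c * t)%N.
have bad_le1 : (count (predC good) s <= 1)%N.
  apply: count_unique_le1 => // x y x_s y_s /negbNE x_bad /negbNE y_bad.
  case/andP: (allP s_cand x x_s) => _ x_cand.
  case/andP: (allP s_cand y y_s) => _ y_cand.
  exact: bad_shifts_unique p_pr x_cand y_cand x_bad y_bad.
have good_le3 : (count good s <= 3)%N.
  rewrite -size_filter; apply: (admissible_shifts_le3 q_prim N_cd pe_n q_root).
    exact: filter_uniq.
  apply/allP => t; rewrite mem_filter => /andP[t_good t_s].
  case/andP: (allP s_cand t t_s) => t_lt _.
  by rewrite t_lt N_cd coprime_shift.
by have := count_predC good s; rewrite s_size; lia.
Qed.

Lemma no_common_large_prime N n (q : algC) p :
  N.-primitive_root q -> q ^+ n * cubicA q + cubicB q = 0 ->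
  prime p -> (5 <= p)%N -> (p %| N)%N -> (p %| n)%N -> False.
Proof.
move=> q_prim q_root p_pr p_ge5 p_N p_n.
apply: (no_common_prime_power (e := 1) (s := iota 0 5) q_prim q_root p_pr);
  rewrite ?expn1 ?iota_uniq //.
apply/allP => t; rewrite mem_iota => /andP[_ t_lt5].
by rewrite (leq_trans t_lt5 p_ge5) orbT.
Qed.

Lemma no_common_nine N n (q : algC) :
  N.-primitive_root q -> q ^+ n * cubicA q + cubicB q = 0 ->
  (9 %| N)%N -> (9 %| n)%N -> False.
Proof.
move=> q_prim q_root nine_N nine_n.
exact: (no_common_prime_power (p := 3) (e := 2) (s := [:: 0; 3; 6; 1; 2]%N)
  q_prim q_root).
Qed.

Local Close Scope ring_scope.

Theorem mainTheorem7 (k m N : nat) :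
  (1 <= k)%N -> (3 <= N)%N -> (1 <= m)%N -> coprime m N ->
  root (Qpoly k.-1) (expi2pi m N) ->
  (gcdn N (4 * k + 1) \in [:: 1%N; 3%N]) /\
  ((k %% 3 != 2)%N -> gcdn N (4 * k + 1) = 1%N).
Proof.
move=> k_ge1 N_ge3 _ m_N Q_root.
have N_gt0 : 0 < N by apply: leq_trans N_ge3.
set n := 4 * k + 1; set q := expi2pi m N.
have q_prim : (N.-primitive_root q)%R := expi2pi_prim N_gt0 m_N.
have q_root : (q ^+ n * cubicA q + cubicB q = 0)%R.
  have n_eq : 4 * k.-1 + 5 = n by rewrite /n; lia.
  by move: Q_root; rewrite /root Qpoly_hornerE n_eq => /eqP.
have g_N : gcdn N n %| N := dvdn_gcdl N n.
have g_n : gcdn N n %| n := dvdn_gcdr N n.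
have g_primes p : prime p -> p %| gcdn N n -> p = 3.
  move=> p_pr p_g; have p_N := dvdn_trans p_g g_N.
  have p_n := dvdn_trans p_g g_n.
  have [p_ge5 | p_lt5] := leqP 5 p.
    by case: (no_common_large_prime q_prim q_root p_pr p_ge5 p_N p_n).
  by move: p_pr p_lt5 p_n; case: (p) => [|[|[|[|[|]]]]] //; lia.
have g_nine : ~~ (9 %| gcdn N n).
  by apply/negP => nine_g; apply: (no_common_nine q_prim q_root);
     [apply: dvdn_trans g_N | apply: dvdn_trans g_n].
have g_gt0 : 0 < gcdn N n by rewrite gcdn_gt0 N_gt0.
have g_13 := divisor_one_or_three g_gt0 g_primes g_nine.
split=> // k_mod3; move: g_13 g_n; rewrite !inE => /orP[/eqP // | /eqP ->]; lia.
Qed.
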